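(* Let $n\ge 1$, let $L>0$ and let $D\subseteq\mathbb{R}$ be compact. Let $T$ be an input-dependent CPTP map on $n$ qubits, i.e. for each $x\in D\cap[-L,L]$, $T(x)$ is a completely positive trace-preserving linear map on the space of $2^n\times 2^n$ complex matrices. Suppose there is $\epsilon$ with $0<\epsilon\le 1$ such that for all $x\in D\cap[-L,L]$, $$\|T(x)|_{H_0(2^n)}\|_{2-2}:=\sup_{A\in H_0(2^n),\,A\neq 0}\frac{\|T(x)A\|_2}{\|A\|_2}\le 1-\epsilon,$$ where $H_0(2^n)$ is the real vector space of $2^n\times 2^n$ traceless Hermitian matrices. Then $T$ is convergent with respect to $K_L(D)$: there exists a sequence $\{\delta_k\}_{k>0}$ with $\lim_{k\to\infty}\delta_k=0$ such that for every input sequence $u=\{u_k\}_{k\ge 1}$ with $u_k\in D\cap[-L,L]$ for all $k$, and any two sequences of density operators $\{\rho_{j,k}\}_{k\ge 0}$ ($j=1,2$) satisfying $\rho_{j,k}=T(u_k)\rho_{j,k-1}$ for $k\ge 1$, one has $\|\rho_{1,k}-\rho_{2,k}\|_2\le\delta_k$ for all $k>0$. Moreover, any pair of initial density operators converge uniformly to one another under $T$ (i.e. the sequence $\delta_k$ can be chosen independent of the initial density operators and of the input sequence).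
   Context: $\|\cdot\|_2$ denotes the Schatten 2-norm (Hilbert–Schmidt norm) $\|A\|_2=\sqrt{{\rm Tr}(A^*A)}$. A density operator is a positive semidefinite $2^n\times 2^n$ matrix of unit trace. $K_L(D)$ denotes the set of real sequences $u=\{u_k\}_{k\in\mathbb{Z}}$ with $u_k\in D\cap[-L,L]$ for all $k$. *)

From HB Require Import structures.
From mathcomp Require Import all_boot all_order all_algebra.
From mathcomp Require Import all_classical all_reals all_analysis.
From mathcomp Require Import complex.
Set Implicit Arguments. Unset Strict Implicit. Unset Printing Implicit Defensive.
Import Order.TTheory GRing.Theory Num.Theory.
Local Open Scope ring_scope.
Local Open Scope complex_scope.

Section QDefs.
Variable R : realType.
Local Notation C := R[i].

Definition qmx (n : nat) := 'M[C]_(2 ^ n).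

Definition adjmx (m : nat) (A : 'M[C]_m) : 'M[C]_m := \matrix_(i, j) (A j i)^*.

Definition hermitian (m : nat) (A : 'M[C]_m) : Prop := adjmx A = A.

(* positive semidefinite operator on C^I, I a finite index type:
   <v, A v> >= 0 for every vector v (order of the num field C[i]) *)
Definition psdF (I : finType) (A : I -> I -> C) : Prop :=
  forall v : I -> C, 0 <= \sum_(i : I) \sum_(j : I) (v i)^* * A i j * v j.

Definition psd (m : nat) (A : 'M[C]_m) : Prop := psdF (fun i j => A i j).

Definition density (m : nat) (A : 'M[C]_m) : Prop := psd A /\ \tr A = 1.

Definition hsnorm (m : nat) (A : 'M[C]_m) : R :=
  Num.sqrt (complex.Re (\tr (adjmx A *m A))).

Definition mxlinear (m : nat) (T : 'M[C]_m -> 'M[C]_m) : Prop :=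
  forall (a : C) (A B : 'M[C]_m), T (a *: A + B) = a *: T A + T B.

(* complete positivity: for every k, id_k (x) T maps positive semidefinite
   operators on C^k (x) C^m to positive semidefinite ones.  An operator on
   C^k (x) C^m is given as a k x k block family X of m x m matrices, with
   entries indexed by pairs (block index, inner index). *)
Definition completely_positive (m : nat) (T : 'M[C]_m -> 'M[C]_m) : Prop :=
  forall (k : nat) (X : 'I_k -> 'I_k -> 'M[C]_m),
    psdF (fun p q : 'I_k * 'I_m => X p.1 q.1 p.2 q.2) ->
    psdF (fun p q : 'I_k * 'I_m => T (X p.1 q.1) p.2 q.2).

Definition trace_preserving (m : nat) (T : 'M[C]_m -> 'M[C]_m) : Prop :=
  forall A, \tr (T A) = \tr A.

Definition CPTP (m : nat) (T : 'M[C]_m -> 'M[C]_m) : Prop :=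
  [/\ mxlinear T, completely_positive T & trace_preserving T].

Definition traceless_herm (m : nat) (A : 'M[C]_m) : Prop :=
  hermitian A /\ \tr A = 0.

Definition inDL (D : set R) (L x : R) : Prop := D x /\ - L <= x <= L.

End QDefs.

From HB Require Import structures.
From mathcomp Require Import all_boot all_order all_algebra.
From mathcomp Require Import all_classical all_reals all_analysis.
From mathcomp Require Import complex.
From mathcomp Require Import ring.
Set Implicit Arguments. Unset Strict Implicit. Unset Printing Implicit Defensive.
Import Order.TTheory GRing.Theory Num.Theory.
Import numFieldNormedType.Exports.
Local Open Scope classical_set_scope.
Local Open Scope ring_scope.

(* The difference of two density operators is traceless Hermitian, so each
   step of the recursion shrinks its Hilbert-Schmidt norm by the factor
   [1 - eps]; since the entries of a density operator have modulus at most 1,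
   the initial difference has norm at most [2 * 2^n], whence the uniform bound
   [delta k = (1 - eps)^k * 2 * 2^n]. *)

Lemma sumr_supp1 (I : finType) (V : nmodType) (i : I) (F : I -> V) :
  (forall l, l != i -> F l = 0) -> \sum_l F l = F i.
Proof. by move=> F0; rewrite (bigD1 i) //= big1 ?addr0. Qed.

Lemma sumr_supp2 (I : finType) (V : nmodType) (i j : I) (F : I -> V) :
  i != j -> (forall l, l != i -> l != j -> F l = 0) -> \sum_l F l = F i + F j.
Proof.
move=> ij F0; rewrite (bigD1 i) //= (bigD1 j) /=; last by rewrite eq_sym ij.
by rewrite big1 ?addr0 // => l /andP [] /F0.
Qed.

Lemma le_geometric (R : numDomainType) (q : R) (d : nat -> R) :
  0 <= q -> (forall k, d k.+1 <= q * d k) -> forall k, d k <= q ^+ k * d 0%N.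
Proof.
move=> q_ge0 dS; elim=> [|k IHk]; first by rewrite expr0 mul1r.
by rewrite (le_trans (dS k)) // exprS -mulrA ler_wpM2l.
Qed.

Section DensityOperators.
Variable R : realType.
Local Notation C := R[i].
Variable m : nat.
Implicit Types (A B : 'M[C]_m) (i j : 'I_m).

Lemma psd_diag_ge0 A i : psd A -> 0 <= A i i.
Proof.
move=> /(_ (fun k => (k == i)%:R)).
rewrite (@sumr_supp1 _ _ i); last first.
  by move=> l /negbTE li; apply: big1 => k _; rewrite li conjC0 !mul0r.
rewrite (@sumr_supp1 _ _ i); last by move=> l /negbTE li; rewrite li !mulr0.
by rewrite eqxx conjC1 mul1r mulr1.
Qed.

Lemma psd_quad2 A i j (a b : C) : psd A -> i != j ->
  0 <= a^* * a * A i i + a^* * b * A i j + b^* * a * A j i + b^* * b * A j j.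
Proof.
move=> /(_ (fun k => (k == i)%:R * a + (k == j)%:R * b)) + ij.
have ji : j != i by rewrite eq_sym.
rewrite (sumr_supp2 ij); last first.
  move=> l /negbTE li /negbTE lj; apply: big1 => k _.
  by rewrite li lj !mul0r addr0 conjC0 !mul0r.
rewrite !(sumr_supp2 ij); last first.
- by move=> l /negbTE li /negbTE lj; rewrite li lj !mul0r addr0 mulr0.
- by move=> l /negbTE li /negbTE lj; rewrite li lj !mul0r addr0 mulr0.
rewrite !eqxx (negbTE ij) (negbTE ji) !mul0r !mul1r !addr0 !add0r => Q_ge0.
by rewrite (le_trans Q_ge0) // le_eqVlt; apply/orP; left; apply/eqP; ring.
Qed.

(* Realness of the form at [e_i + e_j] and at [e_i + 'i e_j] forces
   [A j i = (A i j)^*]. *)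
Lemma psd_entry_conj A i j : psd A -> (A j i)^* = A i j.
Proof.
move=> psdA; have [<-|ij] := eqVneq i j.
  exact: geC0_conj (psd_diag_ge0 i psdA).
have off_real a b : (a^* * b * A i j + b^* * a * A j i)^*
                    = a^* * b * A i j + b^* * a * A j i.
  have diag_real c k : (c^* * c * A k k)^* = c^* * c * A k k.
    by apply: geC0_conj; rewrite mulr_ge0 ?psd_diag_ge0 // mulrC mul_conjC_ge0.
  set d := a^* * a * A i i + b^* * b * A j j.
  have d_real : d^* = d by rewrite /d rmorphD /= !diag_real.
  have := geC0_conj (psd_quad2 a b psdA ij).
  have -> : a^* * a * A i i + a^* * b * A i j + b^* * a * A j i + b^* * b * A j j
          = d + (a^* * b * A i j + b^* * a * A j i) by rewrite /d; ring.
  by rewrite rmorphD /= d_real => /addrI.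
have := off_real 1 1; have := off_real 1 'i.
rewrite conjC1 conjCi !mul1r !mulr1 => im_real re_real.
apply: (mulfI (_ : 2 * 'i != 0)); first by rewrite mulf_neq0 ?pnatr_eq0 ?neq0Ci.
transitivity ('i * (A i j + A j i)^* + ('i * A i j + - 'i * A j i)^*).
  by rewrite !rmorphD !rmorphM /= rmorphN /= conjCi; ring.
by rewrite re_real im_real; ring.
Qed.

Lemma density_diag_le1 A i : density A -> A i i <= 1.
Proof.
move=> [psdA]; rewrite /mxtrace (bigD1 i) //= => <-.
by rewrite lerDl; apply: sumr_ge0 => k _; apply: psd_diag_ge0.
Qed.

(* Positivity at [e_i - (A i j)^* e_j] gives
   [|A i j|^2 (2 - A j j) <= A i i]. *)
Lemma density_entry_le1 A i j : density A -> `|A i j| <= 1.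
Proof.
move=> densA; have [psdA _] := densA.
rewrite -(expr_le1 (_ : 0 < 2)%N) // normCKC.
have [<-|ij] := eqVneq i j.
  rewrite (geC0_conj (psd_diag_ge0 i psdA)).
  by rewrite mulr_ile1 ?psd_diag_ge0 ?density_diag_le1.
have := psd_quad2 1 (- (A i j)^*) psdA ij.
rewrite -(psd_entry_conj j i psdA) rmorphN /= conjCK conjC1 !mul1r.
set c := A i j.
have -> : A i i + - c^* * c + - c * 1 * c^* + - c * - c^* * A j j
        = A i i - (c^* * c) * (2 - A j j) by ring.
rewrite subr_ge0 => key; apply: le_trans (density_diag_le1 i densA).
apply: le_trans key; rewrite ler_peMr ?(mulrC c^*) ?mul_conjC_ge0 //.
have -> : 2 - A j j = 1 + (1 - A j j) by ring.
by rewrite lerDl subr_ge0 density_diag_le1.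
Qed.

Lemma density_sub_entry_le2 A B i j :
  density A -> density B -> `|(A - B) i j| <= 2.
Proof.
move=> densA densB; rewrite !mxE; apply: le_trans (ler_normB _ _) _.
by apply: lerD; apply: density_entry_le1.
Qed.

Lemma density_sub_traceless_herm A B :
  density A -> density B -> traceless_herm (A - B).
Proof.
move=> [psdA trA] [psdB trB]; split; last by rewrite linearB /= trA trB subrr.
apply/matrixP => i j; rewrite !mxE -(psd_entry_conj i j psdA) -(psd_entry_conj i j psdB).
exact: rmorphB.
Qed.

Lemma mxtrace_adjmx_mul A : \tr (adjmx A *m A) = \sum_i \sum_j `|A j i| ^+ 2.
Proof.
by apply: eq_bigr => i _; rewrite mxE; apply: eq_bigr => j _; rewrite mxE normCKC.
Qed.

Lemma hsnorm_le_entry_bound A (c : R) :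
  0 <= c -> (forall i j, `|A i j| <= c%:C%C) -> hsnorm A <= c * m%:R.
Proof.
move=> c_ge0 Ale; rewrite /hsnorm -(ger0_norm (mulr_ge0 c_ge0 (ler0n _ m))).
rewrite -sqrtr_sqr ler_wsqrtr //.
suff : \tr (adjmx A *m A) <= ((c * m%:R) ^+ 2)%:C%C by rewrite lecE => /andP [].
have -> : ((c * m%:R) ^+ 2)%:C%C = \sum_(i < m) \sum_(j < m) c%:C%C ^+ 2.
  rewrite !sumr_const !card_ord -rmorphXn -!rmorphMn /= -mulrnA.
  by rewrite exprMn -natrX mulr_natr.
rewrite mxtrace_adjmx_mul; apply: ler_sum => i _; apply: ler_sum => j _.
by rewrite lerXn2r ?nnegrE ?Ale // (le_trans _ (Ale i j)).
Qed.

Lemma mxlinearB (T : 'M[C]_m -> 'M[C]_m) A B :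
  mxlinear T -> T (A - B) = T A - T B.
Proof.
move=> linT; have := linT (-1) B A.
by rewrite !scaleN1r addrC [- T B + _]addrC.
Qed.

End DensityOperators.

Theorem theorem1 (R : realType) (n : nat) (L : R) (D : set R)
    (T : R -> qmx R n -> qmx R n) (eps : R) :
  (0 < n)%N -> 0 < L -> compact D ->
  (forall x, inDL D L x -> CPTP (T x)) ->
  0 < eps -> eps <= 1 ->
  (forall x, inDL D L x ->
     forall A : qmx R n, traceless_herm A ->
       hsnorm (T x A) <= (1 - eps) * hsnorm A) ->
  exists delta : nat -> R,
    delta @ \oo --> 0 /\
    forall (u : nat -> R), (forall k, (0 < k)%N -> inDL D L (u k)) ->
    forall rho1 rho2 : nat -> qmx R n,
      (forall k, density (rho1 k)) -> (forall k, density (rho2 k)) ->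
      (forall k, (0 < k)%N -> rho1 k = T (u k) (rho1 k.-1)) ->
      (forall k, (0 < k)%N -> rho2 k = T (u k) (rho2 k.-1)) ->
      forall k, (0 < k)%N -> hsnorm (rho1 k - rho2 k) <= delta k.
Proof.
move=> _ _ _ cptpT eps_gt0 eps_le1 contractT.
have q_ge0 : 0 <= 1 - eps by rewrite subr_ge0.
exists (fun k => (1 - eps) ^+ k * (2 * (2 ^ n)%:R)); split.
  rewrite -(mul0r (2 * (2 ^ n)%:R)); apply: cvgM; last exact: cvg_cst.
  by apply: cvg_expr; rewrite ger0_norm // ltrBlDr ltrDl.
move=> u uDL rho1 rho2 dens1 dens2 rho1S rho2S k _.
pose d k := hsnorm (rho1 k - rho2 k).
have dS j : d j.+1 <= (1 - eps) * d j.
  have [linT _ _] := cptpT _ (uDL j.+1 isT).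
  rewrite /d rho1S // rho2S // -mxlinearB //=.
  by apply: contractT; [exact: uDL | exact: density_sub_traceless_herm].
apply: le_trans (le_geometric q_ge0 dS k) _; rewrite ler_wpM2l ?exprn_ge0 //.
apply: hsnorm_le_entry_bound => // i j.
by rewrite rmorph_nat density_sub_entry_le2.
Qed.
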